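(* For every $X \in L^\infty$, the expectation $\mathbb{E}[X]$ is non-empty. Moreover, $\mathbb{E}[X]$ is the smallest closed ball in $\mathbb{K}$ that contains $\mathrm{supp}\, X$ (the closed support of the law of $X$); it is a closed ball of radius $\varepsilon(X)$ (a single point being regarded as a ball of radius $0$).
   Context: $\mathbb{K}$ is a local field (a locally compact, non-discrete, totally disconnected topological field) with non-archimedean absolute value $|\cdot|$ satisfying $|x|=0 \iff x=0$, $|xy|=|x||y|$ and $|x+y|\le |x|\vee|y|$; its nonzero values are the powers $q^k$, $k\in\mathbb{Z}$, for some $q=p^c$ with $p$ prime. $(\Omega,\mathcal{F},\mathbb{P})$ is a probability space and a $\mathbb{K}$-valued random variable is a measurable map into $\mathbb{K}$ with its Borel $\sigma$-field; random variables equal a.s. are identified. $L^\infty$ is the space of $\mathbb{K}$-valued random variables $X$ with $\|X\|_\infty:=\operatorname{ess\,sup}|X|<\infty$. For $X\in L^\infty$, $\varepsilon(X):=\inf\{\|X-c\|_\infty : c\in\mathbb{K}\}$ and the expectation of $X$ is the subset $\mathbb{E}[X]:=\{c\in\mathbb{K} : \|X-c\|_\infty=\varepsilon(X)\}$ of $\mathbb{K}$. *)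

From HB Require Import structures.
From mathcomp Require Import all_boot all_order all_algebra.
From mathcomp Require Import all_classical all_reals all_analysis.
From mathcomp Require Import ess_sup_inf.
Set Implicit Arguments. Unset Strict Implicit. Unset Printing Implicit Defensive.
Import Order.TTheory GRing.Theory Num.Theory.
Import numFieldNormedType.Exports.
Local Open Scope classical_set_scope.
Local Open Scope ring_scope.

Section LocalFieldDefs.
Context {R : realType} {K : fieldType} (v : K -> R).

Definition cball (a : K) (r : R) : set K := [set x | v (x - a) <= r].
Definition oball (a : K) (r : R) : set K := [set x | v (x - a) < r].

Definition Kopen (U : set K) : Prop :=
  forall x, U x -> exists2 r : R, 0 < r & oball x r `<=` U.

Definition Kcompact (A : set K) : Prop :=
  forall (I : Type) (U : I -> set K), (forall i, Kopen (U i)) ->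
    A `<=` \bigcup_i U i ->
    exists2 F : set I, finite_set F & A `<=` \bigcup_(i in F) U i.

Definition Klocally_compact : Prop :=
  forall x : K, exists2 N : set K, Kcompact N &
    exists2 r : R, 0 < r & oball x r `<=` N.

Definition Knon_discrete : Prop := forall x : K, ~ Kopen [set x].

(* K is a local field whose topology comes from the non-archimedean absolute
   value v, whose nonzero values are exactly the q^k (k : int), q = p^c *)
Definition local_field_abs (q : R) : Prop :=
  [/\ (forall x, v x = 0 <-> x = 0) /\
        (forall x y, v (x * y) = v x * v y),
      forall x y, v (x + y) <= Num.max (v x) (v y),
      (forall r, (exists2 x, x != 0 & v x = r) <-> exists k : int, r = q ^ k),
      (exists p c : nat, [/\ prime p, (0 < c)%N & q = (p ^ c)%:R]) &
      Klocally_compact /\ Knon_discrete].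

Definition Kborel : set (set K) := <<s [set U | Kopen U] >>.

Context {d : measure_display} {Omega : measurableType d}
        (P : probability Omega R).

Definition Krandom_variable (X : Omega -> K) : Prop :=
  forall B, Kborel B -> measurable (X @^-1` B).

Definition Kinfnorm (X : Omega -> K) : \bar R :=
  ess_sup P (fun w => (v (X w))%:E).

Definition KLinf (X : Omega -> K) : Prop :=
  Krandom_variable X /\ (Kinfnorm X < +oo)%E.

Definition Keps (X : Omega -> K) : \bar R :=
  ereal_inf [set Kinfnorm (fun w => X w - c) | c in [set: K]].

Definition Kexpect (X : Omega -> K) : set K :=
  [set c | Kinfnorm (fun w => X w - c) = Keps X].

Definition Ksupp (X : Omega -> K) : set K :=
  [set x | forall U, Kopen U -> U x -> (0 < P (X @^-1` U))%E].

End LocalFieldDefs.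

From HB Require Import structures.
From mathcomp Require Import all_boot all_order all_algebra.
From mathcomp Require Import all_classical all_reals all_analysis.
From mathcomp Require Import ess_sup_inf finmap.
Import Order.TTheory GRing.Theory Num.Theory.
Local Open Scope classical_set_scope.
Local Open Scope ring_scope.

(* Write [Kdev c] for the essential supremum of |X - c|. The ultrametric
   inequality gives Kdev c <= max (Kdev c') |c' - c|, and two centres c, c'
   with Kdev c, Kdev c' <= e are within e of each other (compare both with a
   common value of X). Hence a value of X that is close to every term of a
   minimising sequence is itself a minimiser c0, and E[X] is the closed ball of
   radius eps(X) around c0. Each point x of the support satisfies
   |x - c| <= Kdev c, since otherwise a small ball around x would be a null
   event for X. Conversely, if supp X lies in the ball B(a, r), covering the
   compact ball B(a, Kdev a) by B(a, r + 1/n) and by null open sets shows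
   |X - a| <= r almost surely; so eps(X) <= Kdev a <= r and E[X] lies in
   B(a, r). Closed balls are compact because K is locally compact and the
   absolute value is unbounded, so any ball is a rescaled copy of a small one. *)

Section LocalFieldAbs.
Context {R : realType} {K : fieldType} {v : K -> R} {q : R}.
Hypothesis HK : local_field_abs v q.

Lemma lfabs_eq0 x : v x = 0 <-> x = 0.
Proof. by case: HK => -[]. Qed.

Lemma lfabsM x y : v (x * y) = v x * v y.
Proof. by case: HK => -[]. Qed.

Lemma lfabsD x y : v (x + y) <= Num.max (v x) (v y).
Proof. by case: HK. Qed.

Lemma lfabs0 : v 0 = 0.
Proof. exact/lfabs_eq0. Qed.

Lemma lfabs_ge0 x : 0 <= v x.
Proof.
have [->|x0] := eqVneq x 0; first by rewrite lfabs0.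
case: HK => _ _ vq [p [c [pp _ qE]]] _; rewrite qE in vq.
have [k ->] : exists k : int, v x = (p ^ c)%:R ^ k by apply/vq; exists x.
by rewrite ltW // exprz_gt0 // ltr0n expn_gt0 prime_gt0.
Qed.

Lemma lfabs_gt0 x : x != 0 -> 0 < v x.
Proof.
by move=> x0; rewrite lt_def lfabs_ge0 andbT; apply: contra x0 => /eqP/lfabs_eq0->.
Qed.

Lemma lfabs1 : v 1 = 1.
Proof.
have v10 := lt0r_neq0 (lfabs_gt0 1 (oner_neq0 K)).
by apply: (mulfI v10); rewrite -lfabsM !mulr1.
Qed.

Lemma lfabsN x : v (- x) = v x.
Proof.
suff vN1 : v (-1) = 1 by rewrite -mulN1r lfabsM vN1 mul1r.
have : v (-1) ^+ 2 = 1 ^+ 2 by rewrite expr2 -lfabsM mulrNN mulr1 lfabs1 expr1n.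
by move/eqP; rewrite eqrXn2 ?lfabs_ge0 // => /eqP.
Qed.

Lemma lfabs_subC x y : v (x - y) = v (y - x).
Proof. by rewrite -opprB lfabsN. Qed.

Lemma lfabsB_max x y z : v (x - z) <= Num.max (v (x - y)) (v (y - z)).
Proof. by rewrite -(subrKA y) lfabsD. Qed.

Lemma lfabsV x : v x^-1 = (v x)^-1.
Proof.
have [->|x0] := eqVneq x 0; first by rewrite invr0 lfabs0 invr0.
have vx0 := lt0r_neq0 (lfabs_gt0 x x0).
by apply: (mulfI vx0); rewrite -lfabsM !mulfV // lfabs1.
Qed.

Lemma lfabs_unbounded (B : R) : exists2 t, t != 0 & B < v t.
Proof.
case: HK => _ _ vq [p [c [pp c0 qE]]] _.
pose n := Num.Def.archi_bound `|B|.
have Bn : B < n%:R by apply: le_lt_trans (ler_norm B) (archi_boundP _).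
have nq : (n%:R : R) <= q ^+ n.
  rewrite qE -natrX ler_nat ltnW // ltn_expl // (leq_trans (prime_gt1 pp)) //.
  by rewrite -{1}(expn1 p) leq_pexp2l // prime_gt0.
have [t t0 vt] : exists2 t, t != 0 & v t = q ^ (n%:Z) by apply/vq; exists n.
by exists t => //; rewrite vt (lt_le_trans Bn).
Qed.

Lemma oball_Kopen a r : Kopen v (oball v a r).
Proof.
move=> x xr; exists r; first exact: le_lt_trans (lfabs_ge0 (x - a)) xr.
by move=> z zr; apply: le_lt_trans (lfabsB_max z x a) _; rewrite gt_max zr.
Qed.

Lemma cballC_Kopen a r : 0 <= r -> Kopen v (~` cball v a r).
Proof.
move=> r0 y /negP; rewrite -ltNge => ry.
exists (v (y - a)); first exact: le_lt_trans r0 ry.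
move=> z /= zy; apply/negP; rewrite -ltNge (lt_le_trans ry) //.
by have := lfabsB_max y z a; rewrite le_max (lfabs_subC y z) leNgt zy.
Qed.

Lemma Kopen_preimage_lipschitz (f : K -> K) (L : R) (U : set K) : 0 < L ->
  (forall x y, v (f x - f y) <= L * v (x - y)) ->
  Kopen v U -> Kopen v (f @^-1` U).
Proof.
move=> L0 fL Uo x /Uo[s s0 sU]; exists (s / L); first exact: divr_gt0.
move=> y /= ys; apply: sU; rewrite /oball /= (le_lt_trans (fL _ _)) //.
by rewrite -ltr_pdivlMl // mulrC.
Qed.

Lemma Kcompact_sub_image (f : K -> K) (N A : set K) :
  (forall U, Kopen v U -> Kopen v (f @^-1` U)) -> Kopen v (~` A) ->
  Kcompact v N -> A `<=` f @` N -> Kcompact v A.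
Proof.
move=> fcont Ac Nc AfN I U Uo AU.
pose U' (o : option I) :=
  f @^-1` (if o is Some i then U i else ~` A).
have U'o o : Kopen v (U' o) by apply: fcont; case: o.
have NU' : N `<=` \bigcup_o U' o.
  move=> y _; have [/AU[i _ Ui]|nA] := pselect (A (f y)).
    by exists (Some i).
  by exists None.
have [G Gfin GU'] := Nc _ _ U'o NU'.
exists (Some @^-1` G); first by apply: finite_preimage => // i j _ _ [].
move=> z Az; have [y Ny fyz] := AfN z Az.
have [[i|] Go fyU] := GU' y Ny; rewrite /U' /= fyz in fyU.
- by exists i.
- by [].
Qed.

Lemma cball_Kcompact a (B : R) : 0 <= B -> Kcompact v (cball v a B).
Proof.
move=> B0; case: HK => _ _ _ _ [lc _]; have [N Nc [rho rho0 aN]] := lc a.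
have [t t0 vt] := lfabs_unbounded (B / rho).
have vt0 := lfabs_gt0 t t0.
pose f y := a + t * (y - a).
have fB y y' : f y - f y' = t * (y - y').
  by rewrite /f opprD addrACA subrr add0r -mulrBr opprB addrA subrK.
apply: (Kcompact_sub_image f N _ _ (cballC_Kopen a B B0) Nc).
  by move=> U; apply: (Kopen_preimage_lipschitz f _ U vt0) => x y; rewrite fB lfabsM.
move=> z zB; exists (a + t^-1 * (z - a)).
  apply: aN; rewrite /oball /= addrAC subrr add0r lfabsM lfabsV.
  rewrite -ltr_pdivlMl ?invr_gt0 // invrK (le_lt_trans zB) //.
  by rewrite -ltr_pdivrMr // mulrC.
by rewrite /f addrAC subrr add0r mulVKf // addrC subrK.
Qed.

End LocalFieldAbs.

Lemma le_of_lt_addSinv (R : archiRealFieldType) (x y : R) :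
  (forall n : nat, x < y + n.+1%:R^-1) -> x <= y.
Proof.
move=> xy; apply/ler_addgt0Pr => e e0.
have [n ne] := filter_ex (near_infty_natSinv_lt (PosNum e0)).
by rewrite ltW // (lt_le_trans (xy n)) // lerD2l ltW.
Qed.

Section KExpectation.
Context {R : realType} {K : fieldType} {v : K -> R} {q : R}.
Hypothesis HK : local_field_abs v q.
Context {d : measure_display} {Omega : measurableType d}.
Variables (P : probability Omega R) (X : Omega -> K).
Hypothesis Xmeas : Krandom_variable v X.
Hypothesis Xbounded : (Kinfnorm v P X < +oo)%E.

Definition Kdev (c : K) : \bar R := Kinfnorm v P (fun w => X w - c).

Let P_setT_gt0 : (0 < P setT)%E.
Proof. by rewrite probability_setT lte01. Qed.

Lemma ae_exists {Q : Omega -> Prop} : (\forall w \ae P, Q w) -> exists w, Q w.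
Proof. exact: (@filter_ex _ _ (ae_properfilter_algebraOfSetsType P_setT_gt0)). Qed.

Lemma ae_le_Kdev c : \forall w \ae P, ((v (X w - c))%:E <= Kdev c)%E.
Proof. exact: ess_sup_ge. Qed.

Lemma Kdev_le c (e : \bar R) :
  (\forall w \ae P, ((v (X w - c))%:E <= e)%E) -> (Kdev c <= e)%E.
Proof. by move=> ?; apply/ess_supP. Qed.

Lemma Kdev_ge0 c : (0 <= Kdev c)%E.
Proof.
apply: ess_sup_gee => //.
by apply: aeW => w; rewrite lee_fin (lfabs_ge0 HK).
Qed.

Lemma Kdev_le_max c c' : (Kdev c <= maxe (Kdev c') (v (c' - c))%:E)%E.
Proof.
apply: Kdev_le; apply: filterS (ae_le_Kdev c') => w Xc'.
have := lfabsB_max HK (X w) c' c; rewrite le_max => /orP[Xw|c'c].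
  by rewrite le_max (le_trans _ Xc') ?lee_fin.
by rewrite le_max lee_fin c'c orbT.
Qed.

Lemma Kdev_fin c : Kdev c \is a fin_num.
Proof.
rewrite ge0_fin_numE ?Kdev_ge0 // (le_lt_trans (Kdev_le_max c 0)) //.
have -> : Kdev 0 = Kinfnorm v P X by congr ess_sup; apply/funext => w; rewrite subr0.
by rewrite gt_max Xbounded ltry.
Qed.

Lemma Keps_le_Kdev c : (Keps v P X <= Kdev c)%E.
Proof. by apply: ereal_inf_lbound; exists c. Qed.

Lemma Kdev_attains_Keps : exists c0, Kdev c0 = Keps v P X.
Proof.
have Dne : range Kdev != set0 by apply/set0P; exists (Kdev 0), 0.
have [u uD u_cvg] := ereal_inf_seq Dne.
have /choice[cs csE] : forall n, exists c, Kdev c = u n.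
  by move=> n; have [c _ cu] := uD n; exists c.
have [w0 w0P] := ae_exists (ae_foralln (fun n => ae_le_Kdev (cs n))).
exists (X w0); apply/le_anti; rewrite Keps_le_Kdev andbT.
change (Kdev (X w0) <= ereal_inf (range Kdev))%E.
rewrite -(cvg_lim _ u_cvg) //; apply: lime_ge; first by apply/cvgP: u_cvg.
apply: nearW => n; rewrite -csE (le_trans (Kdev_le_max _ (cs n))) //.
by rewrite ge_max lexx (lfabs_subC HK) w0P.
Qed.

Lemma lfabs_sub_le_of_Kdev c c' (e : R) :
  (Kdev c <= e%:E)%E -> (Kdev c' <= e%:E)%E -> v (c - c') <= e.
Proof.
move=> ce c'e; have [w [Xc Xc']] := ae_exists (filterI (ae_le_Kdev c) (ae_le_Kdev c')).
apply: le_trans (lfabsB_max HK c (X w) c') _.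
by rewrite ge_max (lfabs_subC HK c) -!lee_fin (le_trans Xc) ?(le_trans Xc').
Qed.

Lemma Kexpect_cball c0 : Kdev c0 = Keps v P X ->
  Kexpect v P X = cball v c0 (fine (Keps v P X)).
Proof.
move=> c0E; rewrite -c0E; have c0fin := fineK (Kdev_fin c0).
apply/seteqP; split => c.
  move=> cE; have cc0 : Kdev c = Kdev c0 by rewrite c0E; exact: cE.
  by apply: lfabs_sub_le_of_Kdev; rewrite ?cc0 c0fin.
move=> /= cc0; change (Kdev c = Keps v P X).
apply/le_anti; rewrite Keps_le_Kdev andbT -c0E.
by rewrite (le_trans (Kdev_le_max c c0)) // ge_max lexx -c0fin lee_fin (lfabs_subC HK).
Qed.

Lemma not_Ksupp_ae y : ~ Ksupp v P X y ->
  exists2 U, Kopen v U /\ U y & \forall w \ae P, ~ U (X w).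
Proof.
move=> /existsNP[U /not_implyP[Uo /not_implyP[Uy]]].
move=> /negP; rewrite -leNgt => PU0; exists U => //.
exists (X @^-1` U); split; first by apply: Xmeas; apply: sub_gen_smallest.
  by apply/le_anti; rewrite PU0 measure_ge0.
by move=> w /= /contrapT.
Qed.

Lemma Ksupp_sub_ae_notin U : Kopen v U ->
  (\forall w \ae P, ~ U (X w)) -> Ksupp v P X `<=` ~` U.
Proof.
move=> Uo [N [mN PN0 UN]] x xsupp Ux.
have XU0 : P (X @^-1` U) = 0%E.
  apply: (subset_measure0 _ mN _ PN0); first by apply: Xmeas; apply: sub_gen_smallest.
  by move=> w /= XwU; apply: UN => /=; apply.
by have := xsupp U Uo Ux; rewrite XU0 ltxx.
Qed.

Lemma Ksupp_sub_cball_Kdev c : Ksupp v P X `<=` cball v c (fine (Kdev c)).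
Proof.
move=> x xsupp; apply: contrapT.
apply: (Ksupp_sub_ae_notin _ (cballC_Kopen HK c _ (fine_ge0 (Kdev_ge0 c))) _ _ xsupp).
apply: filterS (ae_le_Kdev c) => w Xc nXc; apply: nXc.
by rewrite /cball /= -lee_fin fineK ?Kdev_fin.
Qed.

Lemma ae_Kopen_of_Ksupp (C U : set K) : Kcompact v C -> Kopen v U ->
  Ksupp v P X `&` C `<=` U -> \forall w \ae P, C (X w) -> U (X w).
Proof.
move=> Cc Uo CU.
have /choice[V VP] : forall y, exists V : set K,
    [/\ Kopen v V, \forall w \ae P, ~ V (X w) & Ksupp v P X y \/ V y].
  move=> y; have [ysupp|/not_Ksupp_ae[V [Vo Vy] aeV]] := pselect (Ksupp v P X y).
    by exists set0; split; [move=> ? []|apply: aeW => w []|left].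
  by exists V; split => //; right.
pose W (o : option K) := if o is Some y then V y else U.
have Wo o : Kopen v (W o) by case: o => [y|] //=; case: (VP y).
have CW : C `<=` \bigcup_o W o.
  move=> y Cy; case: (VP y) => _ _ [ysupp|Vy]; last by exists (Some y).
  by exists None => //; apply: CU.
have [G /finite_fsetP[Gs ->] CG] := Cc _ W Wo CW.
pose A (o : option K) := [set w | W o (X w) -> o = None].
have aeA : \forall w \ae P, (\bigcap_(o in [set` Gs]) A o) w.
  apply: filter_bigI => -[y|] _; last exact: aeW.
  by case: (VP y) => _ aeV _; apply: filterS aeV => w nV /nV.
apply: filterS aeA => w AXw /CG [j Gj WXw].
by have jN := AXw j Gj WXw; rewrite jN in WXw.
Qed.

Lemma ae_cball_of_Ksupp a r :
  Ksupp v P X `<=` cball v a r -> \forall w \ae P, v (X w - a) <= r.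
Proof.
move=> suppr; pose B := fine (Kdev a).
have aeB : \forall w \ae P, cball v a B (X w).
  by apply: filterS (ae_le_Kdev a) => w; rewrite /cball /= -lee_fin fineK ?Kdev_fin.
have aer n : \forall w \ae P, cball v a B (X w) -> oball v a (r + n.+1%:R^-1) (X w).
  apply: ae_Kopen_of_Ksupp.
  - exact: (cball_Kcompact HK a _ (fine_ge0 (Kdev_ge0 a))).
  - exact: (oball_Kopen HK a _).
  - move=> y [/suppr yr _]; rewrite /oball /= (le_lt_trans yr) //.
    by rewrite ltrDl invr_gt0 ltr0n.
apply: filterS2 aeB (ae_foralln aer) => w XwB Xwr.
by apply: le_of_lt_addSinv => n; apply: Xwr.
Qed.

Lemma Kexpect_sub_cball a r :
  Ksupp v P X `<=` cball v a r -> Kexpect v P X `<=` cball v a r.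
Proof.
move=> suppr c cE; have ar : (Kdev a <= r%:E)%E.
  by apply: Kdev_le; apply: filterS (ae_cball_of_Ksupp a r suppr) => w; rewrite lee_fin.
have cr : (Kdev c <= r%:E)%E.
  by have -> : Kdev c = Keps v P X := cE; apply: le_trans (Keps_le_Kdev a) ar.
exact: lfabs_sub_le_of_Kdev cr ar.
Qed.

End KExpectation.

Theorem mainTheorem1 (R : realType) (K : fieldType) (v : K -> R) (q : R)
  (HK : local_field_abs v q)
  (d : measure_display) (Omega : measurableType d) (P : probability Omega R)
  (X : Omega -> K) (HX : KLinf v P X) :
  Kexpect v P X !=set0 /\
  (exists a : K, Kexpect v P X = cball v a (fine (Keps v P X))) /\
  Ksupp v P X `<=` Kexpect v P X /\
  (forall (a : K) (r : R), 0 <= r -> Ksupp v P X `<=` cball v a r ->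
     Kexpect v P X `<=` cball v a r).
Proof.
case: HX => Xmeas Xbounded.
have [c0 c0E] := Kdev_attains_Keps HK P X.
have Ecball := Kexpect_cball HK P X Xbounded c0 c0E.
split; [|split; [by exists c0|split]].
- exists c0; rewrite Ecball /cball /= subrr (lfabs0 HK) -c0E.
  exact: fine_ge0 (Kdev_ge0 HK P X c0).
- by rewrite Ecball -c0E; apply: (Ksupp_sub_cball_Kdev HK P X Xmeas Xbounded).
- by move=> a r _; apply: (Kexpect_sub_cball HK P X Xmeas Xbounded).
Qed.
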